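(* Consider clipped ADOPT with $\beta_1,\beta_2\in[0,1)$, $\epsilon>0$, learning rates $\alpha_t>0$, clipping values $c_t\ge0$, and deterministic $\theta_0$: $m_0=0$, $v_0=g_0\odot g_0$, and for $t=1,\dots,T$, $$m_t=\beta_1m_{t-1}+(1-\beta_1)\,\mathrm{Clip}\Big(\frac{g_t}{\max\{\sqrt{v_{t-1}},\epsilon\}},c_t\Big),\quad\theta_t=\theta_{t-1}-\alpha_tm_t,\quad v_t=\beta_2v_{t-1}+(1-\beta_2)g_t\odot g_t,$$ where $g_0,g_1,\dots$ are random vectors in $\mathbb{R}^D$ with $\mathbb{E}\|g_t\|^2\le G^2$ for all $t\ge0$. Then for all $0\le t\le T$, $$\mathbb{E}\big[\|m_t\|^2\big]\le\frac{2G^2}{\epsilon^2}.$$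
   Context: For $a\in\mathbb{R}^D$ and $c\ge0$, $\mathrm{Clip}(a,c)_i=\min\{\max\{a_i,-c\},c\}$. Norms are Euclidean; $\odot$, square root, division and $\max\{\cdot,\epsilon\}$ act elementwise. *)

From HB Require Import structures.
From mathcomp Require Import all_boot all_order all_algebra.
From mathcomp Require Import all_classical all_reals all_analysis.
Set Implicit Arguments. Unset Strict Implicit. Unset Printing Implicit Defensive.
Import Order.TTheory GRing.Theory Num.Theory.
Local Open Scope ring_scope.

Section ADOPT.
Variables (R : realType) (D : nat).

Definition vecR := 'I_D -> R.

Definition sqnorm (a : vecR) : R := \sum_(i < D) a i ^+ 2.

Definition clip (a : vecR) (c : R) : vecR :=
  fun i => Num.min (Num.max (a i) (- c)) c.

Fixpoint adopt_state (beta1 beta2 eps : R) (alpha c : nat -> R)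
  (theta0 : vecR) (g : nat -> vecR) (t : nat) : vecR * vecR * vecR :=
  match t with
  | 0 => ((fun _ => 0), (fun i => g 0%N i * g 0%N i), theta0)
  | t'.+1 =>
      let: (m, v, th) := adopt_state beta1 beta2 eps alpha c theta0 g t' in
      let m' : vecR := fun i => beta1 * m i + (1 - beta1) *
          clip (fun j => g t j / Num.max (Num.sqrt (v j)) eps) (c t) i in
      let th' : vecR := fun i => th i - alpha t * m' i in
      let v' : vecR := fun i => beta2 * v i + (1 - beta2) * (g t i * g t i) in
      (m', v', th')
  end.

Definition adopt_m beta1 beta2 eps alpha c theta0 g t :=
  (adopt_state beta1 beta2 eps alpha c theta0 g t).1.1.

End ADOPT.

From HB Require Import structures.
From mathcomp Require Import all_boot all_order all_algebra.
From mathcomp Require Import all_classical all_reals all_analysis.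
From mathcomp Require Import measurable_realfun lra.
Set Implicit Arguments. Unset Strict Implicit. Unset Printing Implicit Defensive.
Import Order.TTheory GRing.Theory Num.Theory.
Local Open Scope ring_scope.

(* Since max(sqrt v, eps) >= eps and clipping only shrinks coordinates, the
   i-th coordinate fed into m_t has square at most g_{t,i}^2 / eps^2.  By
   convexity of the square, ||m_t||^2 is then dominated pointwise by the
   exponential moving average of ||g_s||^2 / eps^2, whose expectation stays
   below G^2 / eps^2 by induction; the factor 2 is slack. *)

Lemma sqr_div_maxr_le (R : realFieldType) (x s e : R) : 0 < e ->
  (x / Num.max s e) ^+ 2 <= x ^+ 2 / e ^+ 2.
Proof.
move=> e_gt0; have me_gt0 : 0 < Num.max s e by rewrite lt_max e_gt0 orbT.
rewrite exprMn exprVn ler_wpM2l ?sqr_ge0 // lef_pV2 ?posrE ?exprn_gt0 //.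
by rewrite ler_sqr ?nnegrE ?(ltW e_gt0) ?(ltW me_gt0) // le_max lexx orbT.
Qed.

Lemma sqr_convex_le (R : realFieldType) (b a x y : R) :
  0 <= b -> b < 1 -> x ^+ 2 <= y ->
  (b * a + (1 - b) * x) ^+ 2 <= b * a ^+ 2 + (1 - b) * y.
Proof.
move=> b_ge0 b_lt1 xy.
have b1_ge0 : 0 <= 1 - b by rewrite subr_ge0 ltW.
have gap : 0 <= b * (1 - b) * (a - x) ^+ 2 by rewrite mulr_ge0 ?sqr_ge0 ?mulr_ge0.
have : (1 - b) * x ^+ 2 <= (1 - b) * y by rewrite ler_wpM2l.
by rewrite !expr2 in gap *; nra.
Qed.

Lemma sqnorm_ge0 (R : realType) D (a : vecR R D) : 0 <= sqnorm a.
Proof. by apply: sumr_ge0 => i _; exact: sqr_ge0. Qed.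

Lemma clip_sqr_le (R : realType) D (a : vecR R D) c i : 0 <= c ->
  clip a c i ^+ 2 <= a i ^+ 2.
Proof.
move=> c_ge0; rewrite /clip.
by have [] := leP (a i) (- c); have [] := leP (- c) c; have [] := leP (a i) c; nra.
Qed.

(* Exponential moving average with zero initial value; the input [x 0] is ignored. *)
Fixpoint ema (R : nzRingType) (b : R) (x : nat -> R) (t : nat) : R :=
  if t is t'.+1 then b * ema b x t' + (1 - b) * x t else 0.

Lemma ema_ge0 (R : realFieldType) (b : R) x t : 0 <= b -> b < 1 ->
  (forall s, 0 <= x s) -> 0 <= ema b x t.
Proof.
move=> b_ge0 b_lt1 x_ge0; elim: t => [|t IH] //=.
by rewrite addr_ge0 ?mulr_ge0 // subr_ge0 ltW.
Qed.

Definition adopt_v (R : realType) (D : nat) beta1 beta2 eps alpha c theta0 g t :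
  vecR R D := (adopt_state beta1 beta2 eps alpha c theta0 g t).1.2.

Lemma adopt_mS (R : realType) D beta1 beta2 eps alpha c theta0
    (g : nat -> vecR R D) t :
  adopt_m beta1 beta2 eps alpha c theta0 g t.+1 =
  fun i => beta1 * adopt_m beta1 beta2 eps alpha c theta0 g t i + (1 - beta1) *
    clip (fun j => g t.+1 j /
      Num.max (Num.sqrt (adopt_v beta1 beta2 eps alpha c theta0 g t j)) eps)
      (c t.+1) i.
Proof. by rewrite /adopt_m /adopt_v /=; case: adopt_state => [[m v] th]. Qed.

Lemma sqnorm_adopt_m_le_ema (R : realType) D (beta1 beta2 eps : R) alpha c
    theta0 (g : nat -> vecR R D) t :
  0 <= beta1 -> beta1 < 1 -> 0 < eps -> (forall s, 0 <= c s) ->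
  sqnorm (adopt_m beta1 beta2 eps alpha c theta0 g t) <=
  ema beta1 (fun s => sqnorm (g s) / eps ^+ 2) t.
Proof.
move=> b_ge0 b_lt1 eps_gt0 c_ge0; elim: t => [|t IH].
  by rewrite /adopt_m /sqnorm big1 // => i _; rewrite expr0n.
rewrite adopt_mS /=; apply: le_trans (lerD (ler_wpM2l b_ge0 IH) (lexx _)).
rewrite /sqnorm mulr_suml !mulr_sumr -big_split /=; apply: ler_sum => i _.
apply: sqr_convex_le => //; apply: le_trans (clip_sqr_le _ _ (c_ge0 _)) _.
exact: sqr_div_maxr_le.
Qed.

(* The integral of a nonnegative function is a supremum over the simple
   functions below it, so monotonicity needs no measurability. *)
Lemma ge0_le_integral_nomeas d (T : measurableType d) (R : realType)
    (mu : {measure set T -> \bar R}) (f1 f2 : T -> \bar R) :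
  (forall x, (0 <= f1 x)%E) -> (forall x, (f1 x <= f2 x)%E) ->
  (\int[mu]_x f1 x <= \int[mu]_x f2 x)%E.
Proof.
move=> f1_ge0 f12.
have f2_ge0 x : (0 <= f2 x)%E by exact: le_trans (f1_ge0 x) (f12 x).
rewrite !ge0_integralE // !patch_setT.
apply: ereal_sup_le => _ [h hf <-]; exists h => // x.
exact: le_trans (hf x) (f12 x).
Qed.

Section ema_integral.
Context d (T : measurableType d) (R : realType).
Variables (mu : {measure set T -> \bar R}) (b : R) (X : nat -> T -> R).
Hypotheses (b_ge0 : 0 <= b) (b_lt1 : b < 1).
Hypotheses (X_ge0 : forall s w, 0 <= X s w) (mX : forall s, measurable_fun setT (X s)).

Let b1_ge0 : 0 <= 1 - b. Proof. by rewrite subr_ge0 ltW. Qed.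

Let ema_X_ge0 t w : 0 <= ema b (X ^~ w) t.
Proof. exact: ema_ge0. Qed.

Lemma measurable_ema t : measurable_fun setT (fun w => ema b (X ^~ w) t).
Proof.
elim: t => [|t IH] /=; first exact: measurable_cst.
by apply: measurable_funD; apply: measurable_funM => //; exact: measurable_cst.
Qed.

Lemma integral_ema_le (M : R) t : 0 <= M ->
  (forall s, \int[mu]_w (X s w)%:E <= M%:E)%E ->
  (\int[mu]_w (ema b (X ^~ w) t)%:E <= M%:E)%E.
Proof.
move=> M_ge0 EX; elim: t => [|t IH] /=; first by rewrite integral0_eq.
have E_ge0 (f : T -> R) : (forall w, 0 <= f w) -> forall w, setT w -> (0 <= (f w)%:E)%E.
  by move=> f_ge0 w _; rewrite lee_fin.
have mE (f : T -> R) : measurable_fun setT f -> measurable_fun setT (fun w => (f w)%:E).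
  by move=> mf; exact/measurable_EFinP.
have mZ (f : T -> R) k : measurable_fun setT f -> measurable_fun setT (fun w => k * f w).
  by move=> mf; apply: measurable_funM => //; exact: measurable_cst.
under eq_integral do rewrite EFinD.
rewrite ge0_integralD //; last 4 first.
- by apply: E_ge0 => w; rewrite mulr_ge0 ?ema_X_ge0.
- exact/mE/mZ/measurable_ema.
- by apply: E_ge0 => w; rewrite mulr_ge0.
- exact/mE/mZ.
under eq_integral do rewrite EFinM.
under [X in (_ + X)%E]eq_integral do rewrite EFinM.
rewrite !ge0_integralZl_EFin //; last 4 first.
- exact: E_ge0.
- exact/mE.
- exact/E_ge0/ema_X_ge0.
- exact/mE/measurable_ema.
apply: le_trans (leeD (lee_wpmul2l _ IH) (lee_wpmul2l _ (EX t.+1))) _.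
- by rewrite lee_fin.
- by rewrite lee_fin.
by rewrite -!EFinM -EFinD lee_fin; lra.
Qed.

End ema_integral.

Theorem lemmaG13 (R : realType) (D : nat) (d : measure_display)
  (Omega : measurableType d) (P : probability Omega R)
  (beta1 beta2 eps G : R) (alpha c : nat -> R) (theta0 : 'I_D -> R)
  (g : nat -> Omega -> 'I_D -> R) (T : nat) :
  0 <= beta1 -> beta1 < 1 -> 0 <= beta2 -> beta2 < 1 -> 0 < eps ->
  (forall t, 0 < alpha t) -> (forall t, 0 <= c t) ->
  (forall t (i : 'I_D), measurable_fun setT (fun w => g t w i)) ->
  (forall t, (\int[P]_w (sqnorm (g t w))%:E <= (G ^+ 2)%:E)%E) ->
  forall t, (t <= T)%N ->
  (\int[P]_w (sqnorm (adopt_m beta1 beta2 eps alpha c theta0 (fun s => g s w) t))%:E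
     <= (2 * G ^+ 2 / eps ^+ 2)%:E)%E.
Proof.
move=> b_ge0 b_lt1 _ _ eps_gt0 _ c_ge0 mg EG t _.
pose X s w := sqnorm (g s w) / eps ^+ 2.
have eps2V_ge0 : 0 <= (eps ^+ 2)^-1 by rewrite invr_ge0 sqr_ge0.
have X_ge0 s w : 0 <= X s w by rewrite mulr_ge0 ?sqnorm_ge0.
have m_sqnorm s : measurable_fun setT (fun w => sqnorm (g s w)).
  by apply: measurable_sum => i; exact: measurable_funX.
have mX s : measurable_fun setT (X s).
  by apply: measurable_funM => //; exact: measurable_cst.
have EX s : (\int[P]_w (X s w)%:E <= (G ^+ 2 / eps ^+ 2)%:E)%E.
  under eq_integral do rewrite EFinM.
  rewrite ge0_integralZr //.
  - by rewrite EFinM lee_wpmul2r ?lee_fin.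
  - exact/measurable_EFinP.
  - by move=> w _; rewrite lee_fin sqnorm_ge0.
apply: le_trans (ge0_le_integral_nomeas P
  (f2 := fun w => (ema beta1 (X ^~ w) t)%:E) _ _) _.
- by move=> w; rewrite lee_fin sqnorm_ge0.
- by move=> w; rewrite lee_fin; exact: sqnorm_adopt_m_le_ema.
apply: le_trans (integral_ema_le b_ge0 b_lt1 X_ge0 mX t _ EX) _.
  by rewrite divr_ge0 ?sqr_ge0.
by rewrite lee_fin -mulrA ler_peMl ?divr_ge0 ?sqr_ge0 ?ler1n.
Qed.
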